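(* Let $\Lambda=K\mathcal{Q}/I$ be a finite-dimensional algebra over a field $K$ as in the context, let $A\geqslant1$, let $\tilde{\Lambda}=\tilde{\Lambda}_A$ be its stretched algebra, $\varepsilon=\sum_{v\in\mathcal{Q}_0}v\in\tilde{\Lambda}$ and $B=\varepsilon\tilde{\Lambda}\varepsilon$. Then: (1) $\tilde{\Lambda}\varepsilon$ is projective as a right $B$-module; (2) $\varepsilon\tilde{\Lambda}$ is projective as a left $B$-module.
   Context: Conventions: $\mathcal{Q}$ is a finite quiver with vertex set $\mathcal{Q}_0$; $\mathfrak{o}(\alpha)$, $\mathfrak{t}(\alpha)$ denote start and end of an arrow; paths are written left to right. An element $x\in K\mathcal{Q}$ is uniform if $x=vx=xv'$ for vertices $v,v'$. $\Lambda=K\mathcal{Q}/I$ is finite-dimensional with $I$ an admissible ideal generated by a minimal set $\{g^2_1,\dots,g^2_m\}$ of uniform elements. Stretched algebra: for $A\geqslant1$, the quiver $\tilde{\mathcal{Q}}_A$ has all vertices of $\mathcal{Q}$ plus, for each arrow $\alpha$ of $\mathcal{Q}$, new vertices $w_1,\dots,w_{A-1}$; each arrow $\alpha$ is replaced by arrows $\alpha_1,\dots,\alpha_A$ with $\mathfrak{o}(\alpha_1)=\mathfrak{o}(\alpha)$, $\mathfrak{t}(\alpha_j)=\mathfrak{o}(\alpha_{j+1})=w_j$ ($1\le j\le A-1$), $\mathfrak{t}(\alpha_A)=\mathfrak{t}(\alpha)$, and the only arrows incident with $w_j$ are $\alpha_j,\alpha_{j+1}$. $\theta^*:K\mathcal{Q}\to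 K\tilde{\mathcal{Q}}_A$ is the algebra homomorphism fixing vertices and sending $\alpha\mapsto\alpha_1\cdots\alpha_A$; $\tilde{I}_A$ is the ideal generated by $\theta^*(g^2_1),\dots,\theta^*(g^2_m)$; $\tilde{\Lambda}_A=K\tilde{\mathcal{Q}}_A/\tilde{I}_A$. *)

(* Path algebras KQ are modelled by formal finite K-linear
   combinations of (valid) paths, compared coefficientwise; quotients
   KQ/I are modelled as setoids (equality modulo membership in I). *)
From HB Require Import structures.
From mathcomp Require Import all_boot all_order all_algebra.
Set Implicit Arguments. Unset Strict Implicit. Unset Printing Implicit Defensive.
Import GRing.Theory.
Local Open Scope ring_scope.

Section Quiver.
Variables (V E : finType) (s t : E -> V).

(* a path (written left to right) from vertex x.1 following arrows x.2 *)
Definition valid (x : V * seq E) : bool :=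
  match x.2 with
  | [::] => true
  | a :: p => (s a == x.1) && path (fun a b => t a == s b) a p
  end.

Record qpath := QPath { qp_val : V * seq E ; qp_valid : valid qp_val }.
HB.instance Definition _ := [isSub for qp_val].
HB.instance Definition _ := [Equality of qpath by <:].

Definition ev (v : V) : qpath := @QPath (v, [::]) isT.
Definition plen (p : qpath) : nat := size (qp_val p).2.
Definition pend (p : qpath) : V := last (qp_val p).1 (map t (qp_val p).2).
(* product of paths: concatenation if composable, otherwise 0 (None) *)
Definition pmul (p q : qpath) : option qpath :=
  if pend p == (qp_val q).1
  then insub ((qp_val p).1, (qp_val p).2 ++ (qp_val q).2) else None.

Variable K : fieldType.
(* elements of the path algebra KQ: formal finite sums  sum c_i p_i *)
Definition kq := seq (K * qpath).
Definition coef (x : kq) (p : qpath) : K := \sum_(c <- x | c.2 == p) c.1.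
Definition eqkq (x y : kq) : Prop := forall p, coef x p = coef y p.
Definition kq_add (x y : kq) : kq := x ++ y.
Definition kq_opp (x : kq) : kq := [seq (- c.1, c.2) | c <- x].
Definition kq_mul (x y : kq) : kq :=
  flatten (allpairs (fun a b => if pmul a.2 b.2 is Some r then [:: (a.1 * b.1, r)]
                                else [::]) x y).
Definition kq_path (p : qpath) : kq := [:: (1, p)].

Definition inIdeal (m : nat) (P : pred 'I_m) (g : 'I_m -> kq) (x : kq) : Prop :=
  exists l : seq (K * qpath * 'I_m * qpath),
    all (fun c => P c.1.2) l /\
    eqkq x (flatten [seq kq_mul (kq_mul [:: (c.1.1.1, c.1.1.2)] (g c.1.2)) (kq_path c.2)
                    | c <- l]).

Definition eqv (m : nat) (g : 'I_m -> kq) (x y : kq) : Prop :=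
  inIdeal predT g (kq_add x (kq_opp y)).

Definition uniform (x : kq) : Prop :=
  exists v v' : V, eqkq x (kq_mul (kq_path (ev v)) x) /\ eqkq x (kq_mul x (kq_path (ev v'))).

(* <g> is admissible: R^n <= <g> <= R^2 for some n >= 2, R the arrow ideal *)
Definition admissible (m : nat) (g : 'I_m -> kq) : Prop :=
  (forall j p, coef (g j) p != 0 -> (2 <= plen p)%N) /\
  exists n, (2 <= n)%N /\ forall p, (n <= plen p)%N -> inIdeal predT g (kq_path p).

Definition minimal_gens (m : nat) (g : 'I_m -> kq) : Prop :=
  forall i, ~ inIdeal (predC1 i) g (g i).

End Quiver.

(* The stretched quiver tilde Q_A (A >= 1): new vertices w_1..w_{A-1} per arrow
   (encoded inr (alpha, j) with j : 'I_(A-1), j = index-1), arrows alpha_1..alpha_A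
   (encoded (alpha, j) with j : 'I_A, j = index-1). *)
Section Stretch.
Variables (V E : finType) (s t : E -> V) (A : nat).

Definition sV := (V + (E * 'I_(A.-1)))%type.
Definition sE := (E * 'I_(A.-1).+1)%type.
Definition ss (a : sE) : sV :=
  if unlift ord0 a.2 is Some j then inr (a.1, j) else inl (s a.1).
Definition st (a : sE) : sV :=
  if unlift ord_max a.2 is Some j then inr (a.1, j) else inl (t a.1).

(* theta^* on paths: alpha |-> alpha_1 ... alpha_A, vertices fixed *)
Definition theta_path (p : qpath s t) : option (qpath ss st) :=
  insub (inl (qp_val p).1 : sV,
         flatten [seq [seq (a, j) | j <- enum 'I_(A.-1).+1] | a <- (qp_val p).2]).

Variable K : fieldType.
Definition theta (x : kq s t K) : kq ss st K :=
  pmap (fun c : K * qpath s t => omap (fun q => (c.1, q)) (theta_path c.2)) x.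

Definition eps : kq ss st K := [seq (1, ev ss st (inl v)) | v <- enum V].
End Stretch.

(* M is a direct summand of a free B-module B^n (i.e. a projective module):
   f : M -> B^n and h : B^n -> M are B-linear with h o f = id_M.
   T is a setoid-presented ring (equality eqv), inB / inM carve out B and M. *)
Definition right_projective (T : Type) (eqv : T -> T -> Prop) (add mul : T -> T -> T)
    (inB inM : T -> Prop) : Prop :=
  exists n (f : T -> 'I_n -> T) (h : ('I_n -> T) -> T),
    (forall x, inM x -> forall i, inB (f x i)) /\
    (forall x y, inM x -> inM y -> eqv x y -> forall i, eqv (f x i) (f y i)) /\
    (forall x y, inM x -> inM y -> forall i, eqv (f (add x y) i) (add (f x i) (f y i))) /\
    (forall x b, inM x -> inB b -> forall i, eqv (f (mul x b) i) (mul (f x i) b)) /\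
    (forall u, (forall i, inB (u i)) -> inM (h u)) /\
    (forall u v, (forall i, inB (u i)) -> (forall i, inB (v i)) ->
       (forall i, eqv (u i) (v i)) -> eqv (h u) (h v)) /\
    (forall u v, (forall i, inB (u i)) -> (forall i, inB (v i)) ->
       eqv (h (fun i => add (u i) (v i))) (add (h u) (h v))) /\
    (forall u b, (forall i, inB (u i)) -> inB b ->
       eqv (h (fun i => mul (u i) b)) (mul (h u) b)) /\
    (forall x, inM x -> eqv (h (f x)) x).

Definition left_projective (T : Type) (eqv : T -> T -> Prop) (add mul : T -> T -> T)
    (inB inM : T -> Prop) : Prop :=
  exists n (f : T -> 'I_n -> T) (h : ('I_n -> T) -> T),
    (forall x, inM x -> forall i, inB (f x i)) /\
    (forall x y, inM x -> inM y -> eqv x y -> forall i, eqv (f x i) (f y i)) /\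
    (forall x y, inM x -> inM y -> forall i, eqv (f (add x y) i) (add (f x i) (f y i))) /\
    (forall x b, inM x -> inB b -> forall i, eqv (f (mul b x) i) (mul b (f x i))) /\
    (forall u, (forall i, inB (u i)) -> inM (h u)) /\
    (forall u v, (forall i, inB (u i)) -> (forall i, inB (v i)) ->
       (forall i, eqv (u i) (v i)) -> eqv (h u) (h v)) /\
    (forall u v, (forall i, inB (u i)) -> (forall i, inB (v i)) ->
       eqv (h (fun i => add (u i) (v i))) (add (h u) (h v))) /\
    (forall u b, (forall i, inB (u i)) -> inB b ->
       eqv (h (fun i => mul b (u i))) (mul b (h u))) /\
    (forall x, inM x -> eqv (h (f x)) x).

(* Let P be the set of vertices of Q inside the stretched quiver, so that
   epsilon is the sum of the vertices in P.  A new vertex w_j on the stretch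
   of an arrow alpha has one incoming and one outgoing arrow, so every path
   from w_j into P begins with c = alpha_(j+1) ... alpha_A, and every path
   from P to w_j ends with d = alpha_1 ... alpha_j (for w in P both are the
   trivial path at w).  Stripping c_w off the paths of x epsilon that start
   at w, and sending (u_w)_w to sum_w c_w u_w, exhibit Lambda~ epsilon as a
   direct summand of a free right B-module; the paths d_w do the same for
   epsilon Lambda~ on the left.  Stripping respects the ideal and commutes
   with multiplication by B because the relations theta*(g_i) and the
   elements of B start and end in P. *)

From HB Require Import structures.
From mathcomp Require Import all_boot all_order all_algebra zify.
Set Implicit Arguments. Unset Strict Implicit. Unset Printing Implicit Defensive.
Import GRing.Theory.

Section Paths.
Variables (V E : finType) (s t : E -> V).
Local Notation qp := (qpath s t).
Implicit Types (p q r z : qp) (v : V) (l : seq E).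

Fixpoint walk v l : bool :=
  if l is a :: l' then (s a == v) && walk (t a) l' else true.

Lemma valid_walk v l : valid s t (v, l) = walk v l.
Proof.
case: l => [|a l] //=; congr (_ && _).
by elim: l a => [|b l IH] a //=; rewrite IH eq_sym.
Qed.

Lemma walk_cat v l1 l2 :
  walk v (l1 ++ l2) = walk v l1 && walk (last v (map t l1)) l2.
Proof. by elim: l1 v => [|a l IH] v //=; rewrite IH andbA. Qed.

Lemma walk_rcons v l a :
  walk v (rcons l a) = walk v l && (s a == last v (map t l)).
Proof. by rewrite -cats1 walk_cat /= andbT. Qed.

Definition pstart p : V := (qp_val p).1.
Definition parr p : seq E := (qp_val p).2.

Lemma walk_qpath p : walk (pstart p) (parr p).
Proof. by rewrite -valid_walk; case: p => [[v l] ?]. Qed.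

Lemma pendE p : pend p = last (pstart p) (map t (parr p)).
Proof. by []. Qed.

Lemma qpath_val p : (pstart p, parr p) = qp_val p.
Proof. by case: p => [[]]. Qed.

Lemma eq_qpath p q : pstart p = pstart q -> parr p = parr q -> p = q.
Proof. by move=> Hs Ha; apply: val_inj; rewrite /= -!qpath_val Hs Ha. Qed.

Lemma pend_cat p q r : pend p = pstart q -> pstart r = pstart p ->
  parr r = parr p ++ parr q -> pend r = pend q.
Proof. by move=> Hpq Hr Ha; rewrite !pendE Ha Hr map_cat last_cat -pendE Hpq. Qed.

Variant pmul_spec p q : option qp -> Type :=
| PmulSome r of pend p = pstart q & pstart r = pstart p & parr r = parr p ++ parr q :
    pmul_spec p q (Some r)
| PmulNone of pend p <> pstart q : pmul_spec p q None.

Lemma pmulP p q : pmul_spec p q (pmul p q).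
Proof.
rewrite /pmul; case: eqP => Hpq; last by constructor.
case: insubP => [r _ Hr|]; first by constructor; rewrite /pstart /parr ?Hr.
by rewrite valid_walk walk_cat walk_qpath /= -pendE Hpq walk_qpath.
Qed.

Lemma pmul_some p q r : pmul p q = Some r ->
  [/\ pend p = pstart q, pstart r = pstart p & parr r = parr p ++ parr q].
Proof. by case: pmulP => // r' ? ? ? [<-]. Qed.

Lemma pmul_pend p q r : pmul p q = Some r -> pend r = pend q.
Proof. by case/pmul_some; apply: pend_cat. Qed.

Lemma pmul_cat p q r : pend p = pstart q -> pstart r = pstart p ->
  parr r = parr p ++ parr q -> pmul p q = Some r.
Proof.
move=> Hpq Hr Ha; case: pmulP => [r' _ Hr' Ha'|]; last by [].
by congr Some; apply: eq_qpath; rewrite ?Hr ?Ha.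
Qed.

Lemma pmulA p q r :
  obind (fun pq => pmul pq r) (pmul p q) = obind (pmul p) (pmul q r).
Proof.
case: (pmulP p q) => [pq Hpq Hs Ha|Hpq]; case: (pmulP q r) => [qr Hqr Hs' Ha'|Hqr] /=.
- case: pmulP => [x Hx Hxs Hxa|Hx]; case: pmulP => [y Hy Hys Hya|Hy] //.
  + by congr Some; apply: eq_qpath; rewrite ?Hxs ?Hys ?Hs // Hxa Hya Ha Ha' catA.
  + by case: Hy; rewrite Hs'.
  + by case: Hx; rewrite (pend_cat Hpq Hs Ha).
- by case: pmulP => // x; rewrite (pend_cat Hpq Hs Ha).
- by case: pmulP => // x; rewrite Hs'.
- by [].
Qed.

Lemma pmul_evl v q : pmul (ev s t v) q = if pstart q == v then Some q else None.
Proof.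
case: pmulP => [r Hq Hr Ha|Hq]; last by case: eqP => // Hv; case: Hq; rewrite Hv.
by rewrite -Hq eqxx; congr Some; apply: eq_qpath; rewrite ?Hr -?Hq.
Qed.

Lemma pmul_evr v q : pmul q (ev s t v) = if pend q == v then Some q else None.
Proof.
case: pmulP => [r Hq Hr Ha|Hq]; last by case: eqP.
by rewrite Hq eqxx; congr Some; apply: eq_qpath; rewrite ?Hr // Ha cats0.
Qed.

Definition pdivl p r : option qp :=
  if (pstart r == pstart p) && (take (size (parr p)) (parr r) == parr p)
  then insub (pend p, drop (size (parr p)) (parr r)) else None.

Lemma pdivl_mul p z r : pmul p z = Some r -> pdivl p r = Some z.
Proof.
case/pmul_some => pz rp rpz; rewrite /pdivl rp eqxx rpz take_size_cat // eqxx.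
by rewrite drop_size_cat // pz qpath_val valK.
Qed.

Lemma pdivl_some p r z : pdivl p r = Some z -> pmul p z = Some r.
Proof.
rewrite /pdivl; case: andP => // -[/eqP rp /eqP rtake].
case: insubP => // u _ uE [<-]; apply: pmul_cat; rewrite /pstart /parr ?uE //.
by rewrite -[X in X = _](cat_take_drop (size (parr p))) rtake.
Qed.

Definition pdivr p r : option qp :=
  let k := size (parr r) - size (parr p) in
  if (pend r == pend p) && (drop k (parr r) == parr p)
  then insub (pstart r, take k (parr r)) else None.

Lemma pdivr_mul z p r : pmul z p = Some r -> pdivr p r = Some z.
Proof.
move=> zp; have [zpE rz rzp] := pmul_some zp.
rewrite /pdivr (pmul_pend zp) eqxx rzp size_cat addnK drop_size_cat // eqxx.
by rewrite take_size_cat // rz qpath_val valK.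
Qed.

Lemma pdivr_some p r z : pdivr p r = Some z -> pmul z p = Some r.
Proof.
rewrite /pdivr; set k := _ - _; case: andP => // -[/eqP rp /eqP rdrop].
case: insubP => // u _ uE [<-].
have rE : parr r = take k (parr r) ++ parr p by rewrite -rdrop cat_take_drop.
have uend : pend u = last (pstart r) (map t (take k (parr r))).
  by rewrite pendE /pstart /parr uE.
apply: pmul_cat; rewrite /pstart /parr ?uE //; change (pend u = pstart p).
rewrite uend; case pE: (parr p) rE => [|a l] rE.
  by rewrite cats0 in rE; rewrite -rE -pendE rp pendE pE.
have := walk_qpath r; rewrite {1}rE walk_cat /= => /and3P [_ /eqP <- _].
by have := walk_qpath p; rewrite pE /= => /andP [/eqP].
Qed.

End Paths.

Section Combinations.
Variables (V E : finType) (s t : E -> V) (K : fieldType).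
Local Notation qp := (qpath s t).
Local Notation kq := (kq s t K).
Local Open Scope ring_scope.
Implicit Types (x y z : kq) (p q : qp) (F H : qp -> K).

(* Identities in KQ are proved by pairing both sides with an arbitrary weight
   on paths, see eqkq_pair. *)
Definition kq_pair x F : K := \sum_(c <- x) c.1 * F c.2.

Lemma kq_pair_nil F : kq_pair [::] F = 0.
Proof. exact: big_nil. Qed.

Lemma kq_pair_cons c x F : kq_pair (c :: x) F = c.1 * F c.2 + kq_pair x F.
Proof. exact: big_cons. Qed.

Lemma kq_pair_cat x y F : kq_pair (x ++ y) F = kq_pair x F + kq_pair y F.
Proof. exact: big_cat. Qed.

Lemma kq_pair_flatten L F : kq_pair (flatten L) F = \sum_(x <- L) kq_pair x F.
Proof. exact: big_flatten. Qed.

Lemma kq_pair_opp x F : kq_pair (kq_opp x) F = - kq_pair x F.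
Proof. by rewrite /kq_pair big_map -sumrN; apply: eq_bigr => c _; rewrite mulNr. Qed.

Lemma kq_pair_path p F : kq_pair (kq_path K p) F = F p.
Proof. by rewrite kq_pair_cons kq_pair_nil mul1r addr0. Qed.

Lemma eq_kq_pair x F H : F =1 H -> kq_pair x F = kq_pair x H.
Proof. by move=> FH; apply: eq_bigr => c _; rewrite FH. Qed.

Lemma kq_pair0 x F : F =1 (fun=> 0) -> kq_pair x F = 0.
Proof. by move/(eq_kq_pair x) ->; rewrite /kq_pair big1 // => c _; rewrite mulr0. Qed.

Lemma kq_pairD x F H : kq_pair x (fun p => F p + H p) = kq_pair x F + kq_pair x H.
Proof. by rewrite /kq_pair -big_split; apply: eq_bigr => c _; rewrite mulrDr. Qed.

Lemma kq_pairB x F H : kq_pair x (fun p => F p - H p) = kq_pair x F - kq_pair x H.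
Proof. by rewrite /kq_pair -sumrB; apply: eq_bigr => c _; rewrite mulrBr. Qed.

Lemma kq_pairZ x k F : kq_pair x (fun p => k * F p) = k * kq_pair x F.
Proof. by rewrite /kq_pair mulr_sumr; apply: eq_bigr => c _; rewrite mulrCA. Qed.

Lemma kq_pair_sum x (I : Type) (r : seq I) (F : I -> qp -> K) :
  kq_pair x (fun p => \sum_(i <- r) F i p) = \sum_(i <- r) kq_pair x (F i).
Proof. by rewrite /kq_pair exchange_big; apply: eq_bigr => c _; rewrite mulr_sumr. Qed.

Lemma coef_kq_pair x p : coef x p = kq_pair x (fun q => (q == p)%:R).
Proof.
rewrite /coef /kq_pair big_mkcond; apply: eq_bigr => c _.
by case: eqP; rewrite ?mulr1 ?mulr0.
Qed.

Lemma kq_pair_coef x (S : seq qp) F : uniq S -> {subset map snd x <= S} ->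
  kq_pair x F = \sum_(q <- S) coef x q * F q.
Proof.
move=> uS; elim: x => [|c x IH] xS.
  by rewrite kq_pair_nil big1 // => q _; rewrite coef_kq_pair kq_pair_nil mul0r.
rewrite kq_pair_cons IH => [|q xq]; last by apply: xS; rewrite inE xq orbT.
under [RHS]eq_bigr do rewrite coef_kq_pair kq_pair_cons -coef_kq_pair mulrDl.
rewrite big_split /=; congr (_ + _).
rewrite (bigD1_seq c.2) ?xS ?inE ?eqxx //= mulr1 big1 ?addr0 // => q.
by rewrite eq_sym => /negbTE ->; rewrite mulr0 mul0r.
Qed.

Lemma kq_pair_eqkq x y F : eqkq x y -> kq_pair x F = kq_pair y F.
Proof.
move=> xy; pose S := undup (map snd (x ++ y)).
have sub_x : {subset map snd x <= S}.
  by move=> q xq; rewrite mem_undup map_cat mem_cat xq.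
have sub_y : {subset map snd y <= S}.
  by move=> q yq; rewrite mem_undup map_cat mem_cat yq orbT.
rewrite !(@kq_pair_coef _ S) ?undup_uniq //.
by apply: eq_bigr => q _; rewrite xy.
Qed.

Lemma eqkq_pair x y : (forall F, kq_pair x F = kq_pair y F) -> eqkq x y.
Proof. by move=> xy p; rewrite !coef_kq_pair xy. Qed.

Lemma eqkq_refl x : eqkq x x. Proof. by []. Qed.
Lemma eqkq_sym x y : eqkq x y -> eqkq y x. Proof. by move=> xy p. Qed.
Lemma eqkq_trans x y z : eqkq x y -> eqkq y z -> eqkq x z.
Proof. by move=> xy yz p; rewrite xy. Qed.

Lemma kq_pair_mul x y F : kq_pair (kq_mul x y) F =
  kq_pair x (fun a => kq_pair y (fun b => oapp F 0 (pmul a b))).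
Proof.
rewrite /kq_mul kq_pair_flatten /kq_pair big_allpairs_dep.
apply: eq_bigr => a _; rewrite mulr_sumr; apply: eq_bigr => b _.
by case: pmul => [r|] /=; rewrite ?big_cons ?big_nil ?addr0 ?mulr0 ?mulrA.
Qed.

Lemma oapp_obind F (phi : qp -> option qp) o :
  oapp (fun a => oapp F 0 (phi a)) 0 o = oapp F 0 (obind phi o).
Proof. by case: o. Qed.

Lemma mulkqA x y z : eqkq (kq_mul (kq_mul x y) z) (kq_mul x (kq_mul y z)).
Proof.
apply: eqkq_pair => F; rewrite !kq_pair_mul; apply: eq_kq_pair => a.
rewrite kq_pair_mul; apply: eq_kq_pair => b; have := pmulA a b.
case: (pmul a b) => [ab|] /= abA.
  by apply: eq_kq_pair => c; rewrite oapp_obind abA.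
by rewrite kq_pair0 // => c; rewrite oapp_obind -abA.
Qed.

Lemma mulkq_eqkq x x' y y' : eqkq x x' -> eqkq y y' ->
  eqkq (kq_mul x y) (kq_mul x' y').
Proof.
move=> xx' yy'; apply: eqkq_pair => F; rewrite !kq_pair_mul (kq_pair_eqkq _ xx').
by apply: eq_kq_pair => a; apply: kq_pair_eqkq.
Qed.

Lemma mulkq_flattenr x L :
  eqkq (kq_mul x (flatten L)) (flatten [seq kq_mul x y | y <- L]).
Proof.
apply: eqkq_pair => F; rewrite kq_pair_mul kq_pair_flatten big_map.
under eq_bigr do rewrite kq_pair_mul.
by rewrite -kq_pair_sum; apply: eq_kq_pair => a; rewrite kq_pair_flatten.
Qed.

Lemma mulkq_flattenl x L :
  eqkq (kq_mul (flatten L) x) (flatten [seq kq_mul y x | y <- L]).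
Proof.
apply: eqkq_pair => F; rewrite kq_pair_mul !kq_pair_flatten big_map.
by under [RHS]eq_bigr do rewrite kq_pair_mul.
Qed.

Lemma mulkq_catr x y z : eqkq (kq_mul x (y ++ z)) (kq_mul x y ++ kq_mul x z).
Proof.
apply: eqkq_pair => F; rewrite kq_pair_cat !kq_pair_mul -kq_pairD.
by apply: eq_kq_pair => a; rewrite kq_pair_cat.
Qed.

Lemma mulkq_catl x y z : eqkq (kq_mul (y ++ z) x) (kq_mul y x ++ kq_mul z x).
Proof. by apply: eqkq_pair => F; rewrite kq_pair_cat !kq_pair_mul kq_pair_cat. Qed.

Lemma mulkq0 x : eqkq (kq_mul x [::]) [::].
Proof.
apply: eqkq_pair => F; rewrite kq_pair_mul kq_pair_nil kq_pair0 // => a.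
exact: kq_pair_nil.
Qed.

Lemma eqkq_flatten (I : Type) (r : seq I) (f f' : I -> kq) :
  (forall i, eqkq (f i) (f' i)) -> eqkq (flatten (map f r)) (flatten (map f' r)).
Proof.
move=> ff'; apply: eqkq_pair => F; rewrite !kq_pair_flatten !big_map.
by apply: eq_bigr => i _; apply: kq_pair_eqkq.
Qed.


Definition supported (P : pred qp) x : bool := all (fun c => P c.2) x.

Lemma supportedT x : supported predT x.
Proof. exact: all_predT. Qed.

Lemma supported_mul (P Q R : pred qp) x y : supported P x -> supported Q y ->
  (forall a b r, P a -> Q b -> pmul a b = Some r -> R r) ->
  supported R (kq_mul x y).
Proof.
move=> Px Qy PQR; rewrite /supported /kq_mul.
elim: x Px => [|[k a] x IH] //= /andP [Pa Px]; rewrite flatten_cat all_cat IH // andbT.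
elim: y Qy {IH} => [|[k' b] y IH] //= /andP [Qb Qy]; rewrite all_cat IH // andbT.
by case ab: pmul => [r|] //=; rewrite (PQR _ _ _ Pa Qb ab).
Qed.

Lemma supported_flatten (P : pred qp) (I : Type) (r : seq I) (f : I -> kq) :
  (forall i, supported P (f i)) -> supported P (flatten (map f r)).
Proof.
move=> Pf; elim: r => [|i r IH] //=.
by rewrite /supported all_cat; apply/andP; split; [apply: Pf | apply: IH].
Qed.

Lemma eq_kq_pair_supported (P : pred qp) x F H : supported P x ->
  (forall p, P p -> F p = H p) -> kq_pair x F = kq_pair x H.
Proof.
move=> Px FH; apply: eq_big_seq => c xc.
by rewrite FH // (allP Px _ xc).
Qed.

End Combinations.

Section PathMap.
Variables (V E V' E' : finType) (s t : E -> V) (s' t' : E' -> V') (K : fieldType).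
Variable phi : qpath s t -> option (qpath s' t').
Local Open Scope ring_scope.
Implicit Types (x y : kq s t K).

Definition kq_pmap x : kq s' t' K :=
  pmap (fun c : K * qpath s t => omap (fun q => (c.1, q)) (phi c.2)) x.

Lemma kq_pair_pmap x F :
  kq_pair (kq_pmap x) F = kq_pair x (fun a => oapp F 0 (phi a)).
Proof.
rewrite /kq_pmap /kq_pair big_pmap; apply: eq_bigr => c _.
by case: phi => [q|] /=; rewrite ?mulr0.
Qed.

Lemma kq_pmap_eqkq x y : eqkq x y -> eqkq (kq_pmap x) (kq_pmap y).
Proof.
by move=> xy; apply: eqkq_pair => F; rewrite !kq_pair_pmap; apply: kq_pair_eqkq.
Qed.

Lemma kq_pmap_flatten L : eqkq (kq_pmap (flatten L)) (flatten (map kq_pmap L)).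
Proof.
apply: eqkq_pair => F; rewrite kq_pair_pmap !kq_pair_flatten big_map.
by apply: eq_bigr => x _; rewrite kq_pair_pmap.
Qed.

Lemma kq_pmapB x y : eqkq (kq_pmap (kq_add x (kq_opp y)))
  (kq_add (kq_pmap x) (kq_opp (kq_pmap y))).
Proof. by apply: eqkq_pair => F; rewrite !(kq_pair_cat, kq_pair_opp, kq_pair_pmap). Qed.

Lemma supported_pmap (P : pred (qpath s t)) (Q : pred (qpath s' t')) x : supported P x ->
  (forall a r, P a -> phi a = Some r -> Q r) -> supported Q (kq_pmap x).
Proof.
move=> Px PQ; apply/allP => -[k r]; rewrite mem_pmap => /mapP [[k' a] xa] /=.
by case ar: phi => [r'|] //= [_ ->]; apply: PQ (allP Px _ xa) ar.
Qed.

End PathMap.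

Section Ideal.
Variables (V E : finType) (s t : E -> V) (K : fieldType).
Variables (m : nat) (G : 'I_m -> kq s t K).
Local Notation qp := (qpath s t).
Local Notation kq := (kq s t K).
Local Notation ideal := (inIdeal predT G).
Local Notation eqv := (eqv G).
Local Open Scope ring_scope.
Implicit Types (x y : kq) (p q : qp).

Definition gterm (c : K * qp * 'I_m * qp) : kq :=
  kq_mul (kq_mul [:: (c.1.1.1, c.1.1.2)] (G c.1.2)) (kq_path K c.2).

Lemma idealP x : ideal x <-> exists l, eqkq x (flatten (map gterm l)).
Proof.
split=> [[l [_ xl]]|[l xl]]; first by exists l.
by exists l; split=> //; apply/allP.
Qed.

Lemma kq_pair_gterm k p j q F : kq_pair (gterm (k, p, j, q)) F =
  k * kq_pair (G j) (fun b => oapp F 0 (obind (fun pb => pmul pb q) (pmul p b))).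
Proof.
rewrite !kq_pair_mul kq_pair_cons kq_pair_nil addr0; congr (_ * _).
by apply: eq_kq_pair => b; case: pmul => [r|] //=; rewrite kq_pair_path.
Qed.

Lemma ideal_eqkq x y : eqkq x y -> ideal y -> ideal x.
Proof. by move=> xy /idealP [l yl]; apply/idealP; exists l; apply: eqkq_trans yl. Qed.

Lemma ideal_gterm c : ideal (gterm c).
Proof. by apply/idealP; exists [:: c]; rewrite /= cats0. Qed.

Lemma ideal_nil : ideal [::].
Proof. by apply/idealP; exists [::]. Qed.

Lemma ideal_cat x y : ideal x -> ideal y -> ideal (x ++ y).
Proof.
move=> /idealP [l1 xl1] /idealP [l2 yl2]; apply/idealP; exists (l1 ++ l2).
apply: eqkq_pair => F; rewrite map_cat flatten_cat !kq_pair_cat.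
by rewrite (kq_pair_eqkq _ xl1) (kq_pair_eqkq _ yl2).
Qed.

Lemma ideal_flatten_map (I : Type) (r : seq I) (f : I -> kq) :
  (forall i, ideal (f i)) -> ideal (flatten (map f r)).
Proof.
by move=> If; elim: r => [|i r IH] /=; [apply: ideal_nil | apply: ideal_cat].
Qed.

Lemma ideal_opp x : ideal x -> ideal (kq_opp x).
Proof.
case/idealP => l xl; apply/idealP; exists [seq (- c.1.1.1, c.1.1.2, c.1.2, c.2) | c <- l].
apply: eqkq_pair => F; rewrite kq_pair_opp (kq_pair_eqkq _ xl) !kq_pair_flatten.
rewrite !big_map -sumrN; apply: eq_bigr => -[[[k p] j] q] _.
by rewrite !kq_pair_gterm mulNr.
Qed.

Lemma kq_split x : x = flatten [seq [:: c] | c <- x].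
Proof. by elim: x => //= c x <-. Qed.

Lemma ideal_mull x y : ideal y -> ideal (kq_mul x y).
Proof.
case/idealP => l yl; apply: ideal_eqkq (mulkq_eqkq (eqkq_refl x) yl) _.
apply: ideal_eqkq (mulkq_flattenr _ _) _; rewrite -map_comp.
apply: ideal_flatten_map => -[[[k' p] j] q] /=; rewrite [x]kq_split.
apply: ideal_eqkq (mulkq_flattenl _ _) _; rewrite -map_comp.
apply: ideal_flatten_map => -[k u] /=.
have upb b : obind (pmul u) (obind (fun pb => pmul pb q) (pmul p b)) =
    obind (fun ub => pmul ub q) (obind (fun up => pmul up b) (pmul u p)).
  by rewrite (pmulA u p b); case: (pmul p b) => //= pb; rewrite pmulA.
case up: (pmul u p) => [r|] /= in upb.
  apply: (ideal_eqkq _ (ideal_gterm (k * k', r, j, q))); apply: eqkq_pair => F.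
  rewrite kq_pair_mul kq_pair_cons kq_pair_nil addr0 !kq_pair_gterm -mulrA.
  by congr (_ * (_ * _)); apply: eq_kq_pair => b; rewrite oapp_obind upb.
apply: (ideal_eqkq _ ideal_nil); apply: eqkq_pair => F.
rewrite kq_pair_mul kq_pair_cons !kq_pair_nil addr0 kq_pair_gterm.
by rewrite (kq_pair0 (G j)) ?mulr0 // => b; rewrite oapp_obind upb.
Qed.

Lemma ideal_mulr x y : ideal y -> ideal (kq_mul y x).
Proof.
case/idealP => l yl; apply: ideal_eqkq (mulkq_eqkq yl (eqkq_refl x)) _.
apply: ideal_eqkq (mulkq_flattenl _ _) _; rewrite -map_comp.
apply: ideal_flatten_map => -[[[k p] j] q] /=; rewrite [x]kq_split.
apply: ideal_eqkq (mulkq_flattenr _ _) _; rewrite -map_comp.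
apply: ideal_flatten_map => -[k' u] /=.
have pbqu z : obind (fun zq => pmul zq u) (pmul z q) = obind (pmul z) (pmul q u).
  exact: pmulA.
case qu: (pmul q u) => [r|] /= in pbqu.
  apply: (ideal_eqkq _ (ideal_gterm (k * k', p, j, r))); apply: eqkq_pair => F.
  rewrite kq_pair_mul !kq_pair_gterm -mulrA; congr (_ * _); rewrite -kq_pairZ.
  apply: eq_kq_pair => b; case: (pmul p b) => [z|] /=; last by rewrite mulr0.
  rewrite -pbqu; case: (pmul z q) => [zq|] /=; last by rewrite mulr0.
  by rewrite kq_pair_cons kq_pair_nil addr0.
apply: (ideal_eqkq _ ideal_nil); apply: eqkq_pair => F.
rewrite kq_pair_mul kq_pair_gterm kq_pair_nil (kq_pair0 (G j)) ?mulr0 // => b.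
case: (pmul p b) => [z|] //=; have := pbqu z.
by case: (pmul z q) => [zq|] //= zqu; rewrite kq_pair_cons kq_pair_nil zqu mulr0 addr0.
Qed.

Lemma eqv_eqkq x y : eqkq x y -> eqv x y.
Proof.
move=> xy; apply: (ideal_eqkq _ ideal_nil); apply: eqkq_pair => F.
by rewrite kq_pair_cat kq_pair_opp kq_pair_nil (kq_pair_eqkq F xy) subrr.
Qed.

Lemma eqv_refl x : eqv x x.
Proof. exact: eqv_eqkq. Qed.

Lemma eqv_sym x y : eqv x y -> eqv y x.
Proof.
move=> /ideal_opp; apply: ideal_eqkq; apply: eqkq_pair => F.
by rewrite kq_pair_opp !kq_pair_cat !kq_pair_opp opprD opprK addrC.
Qed.

Lemma eqv_trans x y z : eqv x y -> eqv y z -> eqv x z.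
Proof.
move=> xy /(ideal_cat xy); apply: ideal_eqkq; apply: eqkq_pair => F.
by rewrite !kq_pair_cat !kq_pair_opp addrA subrK.
Qed.

Lemma eqv_add x x' y y' : eqv x x' -> eqv y y' -> eqv (kq_add x y) (kq_add x' y').
Proof.
move=> xx' /(ideal_cat xx'); apply: ideal_eqkq; apply: eqkq_pair => F.
rewrite !kq_pair_cat !kq_pair_opp !kq_pair_cat opprD.
by rewrite addrACA.
Qed.

Lemma eqv_mul x x' y y' : eqv x x' -> eqv y y' -> eqv (kq_mul x y) (kq_mul x' y').
Proof.
move=> xx' yy'; apply: ideal_eqkq (ideal_cat (ideal_mulr y xx') (ideal_mull x' yy')).
apply: eqkq_pair => F; rewrite !kq_pair_cat !kq_pair_opp !kq_pair_mul.
under [X in _ = _ + X]eq_kq_pair do rewrite kq_pair_cat kq_pair_opp.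
by rewrite kq_pairB kq_pair_cat kq_pair_opp addrA subrK.
Qed.

Lemma eqv_flatten (I : Type) (r : seq I) (f f' : I -> kq) :
  (forall i, eqv (f i) (f' i)) -> eqv (flatten (map f r)) (flatten (map f' r)).
Proof. by move=> ff'; elim: r => [|i r IH] /=; [apply: eqv_refl | apply: eqv_add]. Qed.

End Ideal.

Section Corner.
Variables (V E : finType) (s t : E -> V) (K : fieldType) (zs : seq V).
Hypothesis zs_uniq : uniq zs.
Local Notation qp := (qpath s t).
Local Notation kq := (kq s t K).
Local Open Scope ring_scope.
Implicit Types (x y : kq).

Definition idem : kq := [seq (1, ev s t v) | v <- zs].
Definition starts_in : pred qp := fun p => pstart p \in zs.
Definition ends_in : pred qp := fun p => pend p \in zs.

Lemma kq_pair_idem F : kq_pair idem F = \sum_(v <- zs) F (ev s t v).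
Proof. by rewrite /kq_pair big_map; apply: eq_bigr => v _; rewrite mul1r. Qed.

Lemma starts_in_idem : supported starts_in idem.
Proof. by rewrite /supported all_map; apply/allP. Qed.

Lemma ends_in_idem : supported ends_in idem.
Proof. by rewrite /supported all_map; apply/allP. Qed.

Lemma starts_in_mul x y : supported starts_in x -> supported starts_in (kq_mul x y).
Proof.
move=> Sx; apply: (supported_mul Sx (supportedT y)) => a b r Sa _.
by case/pmul_some=> _ ra _; rewrite /starts_in ra.
Qed.

Lemma ends_in_mul x y : supported ends_in y -> supported ends_in (kq_mul x y).
Proof.
move=> Ey; apply: (supported_mul (supportedT x) Ey) => a b r _ Eb ab.
by rewrite /ends_in (pmul_pend ab).
Qed.

Lemma sumr_pred1_seq (v : V) (k : K) : v \in zs ->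
  \sum_(w <- zs) (if v == w then k else 0) = k.
Proof.
move=> vz; rewrite (bigD1_seq v) //= eqxx big1 ?addr0 // => w.
by rewrite eq_sym => /negbTE ->.
Qed.

Lemma idem_mull y : supported starts_in y -> eqkq (kq_mul idem y) y.
Proof.
move=> Sy; apply: eqkq_pair => F; rewrite kq_pair_mul kq_pair_idem.
under eq_bigr do under eq_kq_pair do rewrite pmul_evl.
rewrite -kq_pair_sum; apply: (eq_kq_pair_supported Sy) => b Sb.
by rewrite -[RHS](sumr_pred1_seq (F b) Sb); apply: eq_bigr => v _; case: eqP.
Qed.

Lemma idem_mulr y : supported ends_in y -> eqkq (kq_mul y idem) y.
Proof.
move=> Ey; apply: eqkq_pair => F; rewrite kq_pair_mul.
apply: (eq_kq_pair_supported Ey) => b Eb; rewrite kq_pair_idem.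
by rewrite -[RHS](sumr_pred1_seq (F b) Eb); apply: eq_bigr => v _; rewrite pmul_evr; case: eqP.
Qed.

Lemma eqv_corner m (G : 'I_m -> kq) y :
  supported starts_in y -> supported ends_in y -> eqv G y (kq_mul idem (kq_mul y idem)).
Proof.
move=> Sy Ey; apply/eqv_eqkq/eqkq_sym.
exact: eqkq_trans (mulkq_eqkq (eqkq_refl _) (idem_mulr Ey)) (idem_mull Sy).
Qed.

End Corner.

Section RightProjective.
Variables (V E : finType) (s t : E -> V) (K : fieldType).
Variables (m : nat) (G : 'I_m -> kq s t K) (zs : seq V) (c : V -> qpath s t).
Hypotheses (zs_uniq : uniq zs) (G_starts : forall j, supported (starts_in zs) (G j)).
Hypotheses (c_start : forall w, pstart (c w) = w) (c_end : forall w, pend (c w) \in zs).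
Hypothesis c_prefix : forall r, pend r \in zs -> exists z, pmul (c (pstart r)) z = Some r.
Local Notation qp := (qpath s t).
Local Notation kq := (kq s t K).
Local Notation ideal := (inIdeal predT G).
Local Notation eqv := (eqv G).
Local Notation idem := (idem s t K zs).
Local Open Scope ring_scope.
Implicit Types (x y : kq) (a b r z : qp).

Lemma pdivl_mulr w a b : pstart b \in zs ->
  obind (pdivl (c w)) (pmul a b) = obind (fun a' => pmul a' b) (pdivl (c w) a).
Proof.
move=> bz; case ca: (pdivl (c w) a) => [z|] /=.
  have cz := pdivl_some ca; have [cz_end _ _] := pmul_some cz.
  have := pmulA (c w) z b; rewrite cz /= => ->.
  case zb: (pmul z b) => [y|] //=; have [_ yz _] := pmul_some zb.
  case cy: (pmul (c w) y) => [r|] /=; first exact: pdivl_mul cy.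
  by move: cy; case: pmulP => // -[]; rewrite yz.
case ab: (pmul a b) => [r|] //=; case cr: (pdivl (c w) r) => [y|] //.
have [ab_end ra _] := pmul_some ab; have [_ rc _] := pmul_some (pdivl_some cr).
have [z cz] : exists z, pmul (c (pstart a)) z = Some a by apply: c_prefix; rewrite ab_end.
by move: ca; rewrite -ra rc c_start in cz; rewrite (pdivl_mul cz).
Qed.

Lemma kq_pmap_pdivl_mulr w x y : supported (starts_in zs) y ->
  eqkq (kq_pmap (pdivl (c w)) (kq_mul x y)) (kq_mul (kq_pmap (pdivl (c w)) x) y).
Proof.
move=> Sy; apply: eqkq_pair => F; rewrite kq_pair_pmap !kq_pair_mul kq_pair_pmap.
apply: eq_kq_pair => a.
transitivity (kq_pair y (fun b => oapp F 0 (obind (fun a' => pmul a' b) (pdivl (c w) a)))).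
  by apply: (eq_kq_pair_supported Sy) => b Sb; rewrite oapp_obind pdivl_mulr.
by case: (pdivl (c w) a) => [z|] //=; rewrite kq_pair0.
Qed.

Lemma ideal_pmap_pdivl w x : ideal x -> ideal (kq_pmap (pdivl (c w)) x).
Proof.
case/idealP => l xl; apply: ideal_eqkq (kq_pmap_eqkq _ xl) _.
apply: ideal_eqkq (kq_pmap_flatten _ _) _; rewrite -map_comp.
apply: ideal_flatten_map => -[[[k p] j] q] /=.
apply: ideal_eqkq (kq_pmap_eqkq _ (mulkqA _ _ _)) _.
apply: ideal_eqkq (kq_pmap_pdivl_mulr _ _ (starts_in_mul _ (G_starts j))) _.
rewrite /kq_pmap /=; case: (pdivl (c w) p) => [p'|] /=; last exact: ideal_nil.
exact: ideal_eqkq (eqkq_sym (mulkqA _ _ _)) (ideal_gterm G (k, p', j, q)).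
Qed.

Lemma eqv_pmap_pdivl w x y : eqv x y ->
  eqv (kq_pmap (pdivl (c w)) x) (kq_pmap (pdivl (c w)) y).
Proof. by move/(ideal_pmap_pdivl w); apply: ideal_eqkq; apply: eqkq_sym; apply: kq_pmapB. Qed.

Lemma pdivl_c_none w r : pstart r != w -> pdivl (c w) r = None.
Proof.
move=> rw; case cr: pdivl => [z|] //; case/negP: rw.
by have [_ -> _] := pmul_some (pdivl_some cr); rewrite c_start.
Qed.

Lemma starts_in_pmap_pdivl w x : supported (starts_in zs) (kq_pmap (pdivl (c w)) x).
Proof.
apply: supported_pmap (supportedT x) _ => a z _ /pdivl_some /pmul_some [cz _ _].
by rewrite /starts_in -cz c_end.
Qed.

Lemma ends_in_pmap_pdivl w x : supported (ends_in zs) x ->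
  supported (ends_in zs) (kq_pmap (pdivl (c w)) x).
Proof.
move=> Ex; apply: supported_pmap Ex _ => a z Ea /pdivl_some cz.
by rewrite /ends_in -(pmul_pend cz).
Qed.

Let n := #|V|.

Definition coordR x (i : 'I_n) : kq := kq_pmap (pdivl (c (enum_val i))) (kq_mul x idem).

Definition combR (u : 'I_n -> kq) : kq :=
  flatten [seq kq_mul (kq_path K (c (enum_val i))) (u i) | i <- enum 'I_n].

Lemma combR_coordR x : eqkq (combR (coordR x)) (kq_mul x idem).
Proof.
apply: eqkq_pair => F; rewrite /combR kq_pair_flatten big_map.
under eq_bigr do rewrite kq_pair_mul kq_pair_path /coordR kq_pair_pmap.
rewrite -kq_pair_sum.
apply: (eq_kq_pair_supported (ends_in_mul x (ends_in_idem _ _ _ _))) => r Er.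
rewrite big_enum /= -(big_enum_val (fun w =>
  oapp (fun b => oapp F 0 (pmul (c w) b)) 0 (pdivl (c w) r))) /=.
have [z cz] := c_prefix Er.
rewrite (bigD1 (pstart r)) //= (pdivl_mul cz) /= cz /= big1 ?addr0 // => w rw.
by rewrite pdivl_c_none // eq_sym.
Qed.

Theorem right_projective_of_prefix :
  right_projective eqv (@kq_add _ _ _ _ K) (@kq_mul _ _ _ _ K)
    (fun x => eqv x (kq_mul idem (kq_mul x idem))) (fun x => eqv x (kq_mul x idem)).
Proof.
exists n, coordR, combR.
split; [|split; [|split; [|split; [|split; [|split; [|split; [|split]]]]]]].
- move=> x _ i; apply: eqv_corner => //; first exact: starts_in_pmap_pdivl.
  exact/ends_in_pmap_pdivl/ends_in_mul/ends_in_idem.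
- by move=> x y _ _ xy i; apply/eqv_pmap_pdivl/eqv_mul/eqv_refl.
- move=> x y _ _ i; apply: eqv_eqkq; rewrite /coordR /kq_add /kq_pmap -pmap_cat.
  exact: kq_pmap_eqkq (mulkq_catl _ _ _).
- move=> x b Mx Bb i; rewrite /coordR.
  set b' := kq_mul idem (kq_mul b idem).
  have Sb' : supported (starts_in zs) b' by apply/starts_in_mul/starts_in_idem.
  have Eb' : supported (ends_in zs) b' by apply/ends_in_mul/ends_in_mul/ends_in_idem.
  have xb : eqv (kq_mul (kq_mul x b) idem) (kq_mul (kq_mul x idem) b').
    apply: eqv_trans (eqv_mul (eqv_mul Mx Bb) (eqv_refl _ idem)) _.
    apply/eqv_eqkq/(eqkq_trans (mulkqA _ _ _)).
    exact: mulkq_eqkq (eqkq_refl _) (idem_mulr zs_uniq Eb').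
  apply: eqv_trans (eqv_pmap_pdivl _ xb) _.
  apply: eqv_trans (eqv_eqkq _ (kq_pmap_pdivl_mulr _ _ Sb')) _.
  exact: eqv_mul (eqv_refl _ _) (eqv_sym Bb).
- move=> u Bu; set u' := fun i => kq_mul idem (kq_mul (u i) idem).
  have uu' : eqv (combR u) (combR u').
    by apply: eqv_flatten => i; apply/eqv_mul/Bu/eqv_refl.
  have Eu' : supported (ends_in zs) (combR u').
    by apply: supported_flatten => i; apply/ends_in_mul/ends_in_mul/ends_in_mul/ends_in_idem.
  apply: (eqv_trans uu'); apply: eqv_trans (eqv_eqkq _ (eqkq_sym (idem_mulr zs_uniq Eu'))) _.
  exact: eqv_mul (eqv_sym uu') (eqv_refl _ _).
- by move=> u v _ _ uv; apply: eqv_flatten => i; apply/eqv_mul/uv/eqv_refl.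
- move=> u v _ _; apply: eqv_eqkq; rewrite /combR /kq_add.
  apply: eqkq_trans (eqkq_flatten _ (fun i => mulkq_catr _ _ _)) _.
  apply: eqkq_pair => F; rewrite kq_pair_cat !kq_pair_flatten !big_map -big_split.
  by apply: eq_bigr => i _; rewrite kq_pair_cat.
- move=> u b _ _; apply: eqv_eqkq; rewrite /combR.
  apply: eqkq_trans (eqkq_flatten _ (fun i => eqkq_sym (mulkqA _ _ _))) _.
  by apply: eqkq_sym; apply: eqkq_trans (mulkq_flattenl _ _) _; rewrite -map_comp.
- by move=> x Mx; apply: eqv_trans (eqv_eqkq _ (combR_coordR x)) (eqv_sym Mx).
Qed.

End RightProjective.

Section LeftProjective.
Variables (V E : finType) (s t : E -> V) (K : fieldType).
Variables (m : nat) (G : 'I_m -> kq s t K) (zs : seq V) (d : V -> qpath s t).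
Hypotheses (zs_uniq : uniq zs) (G_ends : forall j, supported (ends_in zs) (G j)).
Hypotheses (d_end : forall w, pend (d w) = w) (d_start : forall w, pstart (d w) \in zs).
Hypothesis d_suffix : forall r, pstart r \in zs -> exists z, pmul z (d (pend r)) = Some r.
Local Notation qp := (qpath s t).
Local Notation kq := (kq s t K).
Local Notation ideal := (inIdeal predT G).
Local Notation eqv := (eqv G).
Local Notation idem := (idem s t K zs).
Local Open Scope ring_scope.
Implicit Types (x y : kq) (a b r z : qp).

Lemma pdivr_mull w a b : pend b \in zs ->
  obind (pdivr (d w)) (pmul b a) = obind (pmul b) (pdivr (d w) a).
Proof.
move=> bz; case da: (pdivr (d w) a) => [z|] /=.
  have zd := pdivr_some da; have [zd_end _ _] := pmul_some zd.
  have := pmulA b z (d w); rewrite zd /= => <-.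
  case bz': (pmul b z) => [y|] //=.
  case yd: (pmul y (d w)) => [r|] /=; first exact: pdivr_mul yd.
  by move: yd; case: pmulP => // -[]; rewrite (pmul_pend bz').
case ba: (pmul b a) => [r|] //=; case rd: (pdivr (d w) r) => [y|] //.
have [ba_end _ _] := pmul_some ba; have rw := pmul_pend (pdivr_some rd).
have [z zd] : exists z, pmul z (d (pend a)) = Some a by apply: d_suffix; rewrite -ba_end.
by move: da; rewrite -(pmul_pend ba) rw d_end in zd; rewrite (pdivr_mul zd).
Qed.

Lemma kq_pmap_pdivr_mull w x y : supported (ends_in zs) x ->
  eqkq (kq_pmap (pdivr (d w)) (kq_mul x y)) (kq_mul x (kq_pmap (pdivr (d w)) y)).
Proof.
move=> Ex; apply: eqkq_pair => F; rewrite kq_pair_pmap !kq_pair_mul.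
apply: (eq_kq_pair_supported Ex) => b Eb; rewrite kq_pair_pmap.
by apply: eq_kq_pair => a; rewrite !oapp_obind pdivr_mull.
Qed.

Lemma ideal_pmap_pdivr w x : ideal x -> ideal (kq_pmap (pdivr (d w)) x).
Proof.
case/idealP => l xl; apply: ideal_eqkq (kq_pmap_eqkq _ xl) _.
apply: ideal_eqkq (kq_pmap_flatten _ _) _; rewrite -map_comp.
apply: ideal_flatten_map => -[[[k p] j] q]; rewrite /gterm /=.
apply: ideal_eqkq (kq_pmap_pdivr_mull _ _ (ends_in_mul _ (G_ends j))) _.
rewrite /kq_pmap /=; case: (pdivr (d w) q) => [q'|] /=.
  exact: ideal_gterm G (k, p, j, q').
exact: ideal_eqkq (mulkq0 _) (ideal_nil G).
Qed.

Lemma eqv_pmap_pdivr w x y : eqv x y ->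
  eqv (kq_pmap (pdivr (d w)) x) (kq_pmap (pdivr (d w)) y).
Proof. by move/(ideal_pmap_pdivr w); apply: ideal_eqkq; apply: eqkq_sym; apply: kq_pmapB. Qed.

Lemma pdivr_d_none w r : pend r != w -> pdivr (d w) r = None.
Proof.
move=> rw; case rd: pdivr => [z|] //; case/negP: rw.
by rewrite (pmul_pend (pdivr_some rd)) d_end.
Qed.

Lemma ends_in_pmap_pdivr w x : supported (ends_in zs) (kq_pmap (pdivr (d w)) x).
Proof.
apply: supported_pmap (supportedT x) _ => a z _ /pdivr_some /pmul_some [zd _ _].
by rewrite /ends_in zd d_start.
Qed.

Lemma starts_in_pmap_pdivr w x : supported (starts_in zs) x ->
  supported (starts_in zs) (kq_pmap (pdivr (d w)) x).
Proof.
move=> Sx; apply: supported_pmap Sx _ => a z Sa /pdivr_some /pmul_some [_ az _].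
by rewrite /starts_in -az.
Qed.

Let n := #|V|.

Definition coordL x (i : 'I_n) : kq := kq_pmap (pdivr (d (enum_val i))) (kq_mul idem x).

Definition combL (u : 'I_n -> kq) : kq :=
  flatten [seq kq_mul (u i) (kq_path K (d (enum_val i))) | i <- enum 'I_n].

Lemma combL_coordL x : eqkq (combL (coordL x)) (kq_mul idem x).
Proof.
apply: eqkq_pair => F; rewrite /combL kq_pair_flatten big_map.
under eq_bigr do rewrite kq_pair_mul /coordL kq_pair_pmap.
rewrite -kq_pair_sum.
apply: (eq_kq_pair_supported (starts_in_mul _ (starts_in_idem _ _ _ _))) => r Sr.
rewrite big_enum /= -(big_enum_val (fun w => oapp (fun a =>
  kq_pair (kq_path K (d w)) (fun b => oapp F 0 (pmul a b))) 0 (pdivr (d w) r))) /=.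
have [z zd] := d_suffix Sr.
rewrite (bigD1 (pend r)) //= (pdivr_mul zd) /= kq_pair_path zd big1 ?addr0 // => w rw.
by rewrite pdivr_d_none // eq_sym.
Qed.

Theorem left_projective_of_suffix :
  left_projective eqv (@kq_add _ _ _ _ K) (@kq_mul _ _ _ _ K)
    (fun x => eqv x (kq_mul idem (kq_mul x idem))) (fun x => eqv x (kq_mul idem x)).
Proof.
exists n, coordL, combL.
split; [|split; [|split; [|split; [|split; [|split; [|split; [|split]]]]]]].
- move=> x _ i; apply: eqv_corner => //; last exact: ends_in_pmap_pdivr.
  exact/starts_in_pmap_pdivr/starts_in_mul/starts_in_idem.
- by move=> x y _ _ xy i; apply/eqv_pmap_pdivr/eqv_mul/xy/eqv_refl.
- move=> x y _ _ i; apply: eqv_eqkq; rewrite /coordL /kq_add /kq_pmap -pmap_cat.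
  exact: kq_pmap_eqkq (mulkq_catr _ _ _).
- move=> x b Mx Bb i; rewrite /coordL.
  set b' := kq_mul idem (kq_mul b idem).
  have Sb' : supported (starts_in zs) b' by apply/starts_in_mul/starts_in_idem.
  have Eb' : supported (ends_in zs) b' by apply/ends_in_mul/ends_in_mul/ends_in_idem.
  have bx : eqv (kq_mul idem (kq_mul b x)) (kq_mul b' (kq_mul idem x)).
    apply: eqv_trans (eqv_mul (eqv_refl _ idem) (eqv_mul Bb Mx)) _.
    apply/eqv_eqkq/(eqkq_trans (eqkq_sym (mulkqA _ _ _))).
    exact: mulkq_eqkq (idem_mull zs_uniq Sb') (eqkq_refl _).
  apply: eqv_trans (eqv_pmap_pdivr _ bx) _.
  apply: eqv_trans (eqv_eqkq _ (kq_pmap_pdivr_mull _ _ Eb')) _.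
  exact: eqv_mul (eqv_sym Bb) (eqv_refl _ _).
- move=> u Bu; set u' := fun i => kq_mul idem (kq_mul (u i) idem).
  have uu' : eqv (combL u) (combL u').
    by apply: eqv_flatten => i; apply/eqv_mul/eqv_refl/Bu.
  have Su' : supported (starts_in zs) (combL u').
    by apply: supported_flatten => i; apply/starts_in_mul/starts_in_mul/starts_in_idem.
  apply: (eqv_trans uu'); apply: eqv_trans (eqv_eqkq _ (eqkq_sym (idem_mull zs_uniq Su'))) _.
  exact: eqv_mul (eqv_refl _ _) (eqv_sym uu').
- by move=> u v _ _ uv; apply: eqv_flatten => i; apply/eqv_mul/eqv_refl/uv.
- move=> u v _ _; apply: eqv_eqkq; rewrite /combL /kq_add.
  apply: eqkq_trans (eqkq_flatten _ (fun i => mulkq_catl _ _ _)) _.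
  apply: eqkq_pair => F; rewrite kq_pair_cat !kq_pair_flatten !big_map -big_split.
  by apply: eq_bigr => i _; rewrite kq_pair_cat.
- move=> u b _ _; apply: eqv_eqkq; rewrite /combL.
  apply: eqkq_trans (eqkq_flatten _ (fun i => mulkqA _ _ _)) _.
  by apply: eqkq_sym; apply: eqkq_trans (mulkq_flattenr _ _) _; rewrite -map_comp.
- by move=> x Mx; apply: eqv_trans (eqv_eqkq _ (combL_coordL x)) (eqv_sym Mx).
Qed.

End LeftProjective.

Section StretchedQuiver.
Variables (V E : finType) (s t : E -> V) (B : nat).
Local Notation SV := (sV V E B.+1).
Local Notation SE := (sE E B.+1).
Local Notation ss := (@ss V E s B.+1).
Local Notation st := (@st V E t B.+1).
Local Notation qp := (qpath ss st).
Implicit Types (al : E) (w : SV) (l : seq SE).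

(* [pos al k] is the vertex reached after [k] steps along the stretched arrow [al]. *)
Definition pos al k : SV :=
  if k is k'.+1 then if insub k' is Some j then inr (al, j) else inl (t al)
  else inl (s al).

Lemma ssE al i : ss (al, i) = pos al i.
Proof.
rewrite /ss /=; case: unliftP => [j ->|->] //.
by rewrite lift0 /= insubT //= => ?; congr (inr (_, _)); apply: val_inj.
Qed.

Lemma stE al i : st (al, i) = pos al i.+1.
Proof.
rewrite /st /=; case: unliftP => [j ->|->] /=.
  rewrite /bump leqNgt ltn_ord add0n insubT //= => ?.
  by congr (inr (_, _)); apply: val_inj.
by rewrite insubF // ltnn.
Qed.

Lemma pos_inr al (j : 'I_B) : pos al j.+1 = inr (al, j).
Proof. by rewrite /= insubT //= => ?; congr (inr (_, _)); apply: val_inj. Qed.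

Lemma pos_max al : pos al B.+1 = inl (t al).
Proof. by rewrite /= insubF // ltnn. Qed.

Lemma pos_inner al k : 0 < k <= B -> exists j : 'I_B, pos al k = inr (al, j) /\ val j = k.-1.
Proof.
case: k => // k /andP [_ kB]; exists (Ordinal kB).
by split; first exact: (pos_inr al (Ordinal kB)).
Qed.

Lemma pos_inj be al i k : 0 < k <= B -> pos be i = pos al k -> be = al /\ i = k.
Proof.
move=> kB; have [j [-> jk]] := pos_inner al kB.
case: i => [|i] //=; case: insubP => // j' _ j'i [<- jj']; split=> //.
by case: k kB jk => // k _ /= <-; rewrite -j'i jj'.
Qed.

Definition seg al i n : seq SE := [seq (al, inord k) | k <- iota i n].

Lemma seg_rcons al n : seg al 0 n.+1 = rcons (seg al 0 n) (al, inord n).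
Proof. by rewrite /seg -[n.+1]addn1 iotaD map_cat cats1. Qed.

Lemma walk_seg al i n : i + n <= B.+1 ->
  walk ss st (pos al i) (seg al i n) /\ last (pos al i) (map st (seg al i n)) = pos al (i + n).
Proof.
elim: n i => [|n IH] i iB /=; first by rewrite addn0.
have [|IHw IHl] := IH i.+1; first by rewrite addSnnS.
rewrite ssE stE inordK; last lia.
by rewrite eqxx IHw IHl addSnnS.
Qed.

Lemma seg_prefix al k l : 0 < k <= B.+1 -> walk ss st (pos al k) l ->
  (exists v, last (pos al k) (map st l) = inl v) ->
  exists l', l = seg al k (B.+1 - k) ++ l'.
Proof.
move=> kB; have [n nk] : exists n, B.+1 - k = n by exists (B.+1 - k).
rewrite nk; elim: n k l kB nk => [|n IH] k l kB nk wl lv; first by exists l.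
have kB' : 0 < k <= B by lia.
case: l => [|a l] /= in wl lv *.
  by case: lv => v; have [j [->]] := pos_inner al kB'.
case: a => be i in wl lv *; case/andP: wl => /eqP sa wl; rewrite ssE in sa.
have [? ik] := pos_inj kB' sa; subst be; rewrite stE ik in wl lv.
have -> : i = inord k by apply: val_inj; rewrite /= inordK ?ik //; lia.
by have [||l' ->] := IH k.+1 l _ _ wl lv; try lia; exists l'.
Qed.

Lemma seg_suffix al k v0 l : 0 < k <= B -> walk ss st (inl v0) l ->
  last (inl v0) (map st l) = pos al k -> exists l0, l = l0 ++ seg al 0 k.
Proof.
elim: k l => [|k IH] l // kB; case/lastP: l => [|l [be i]].
  by move=> _ lv; have [j [lj _]] := pos_inner al kB; rewrite lj in lv.
rewrite walk_rcons map_rcons last_rcons stE => /andP [wl /eqP sa] lv.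
have [? [ik]] := pos_inj kB lv; subst be; rewrite seg_rcons.
have -> : i = inord k by apply: val_inj; rewrite /= inordK ?ik //; lia.
have [->|k0] := posnP k; first by exists l; rewrite cats1.
have [||l0 ->] := IH l _ wl; [lia | by rewrite -sa ssE ik | by exists l0; rewrite rcons_cat].
Qed.

Definition orig : seq SV := map inl (enum V).

Lemma orig_uniq : uniq orig.
Proof. by rewrite map_inj_uniq ?enum_uniq // => ? ? []. Qed.

Lemma mem_orig w : (w \in orig) = if w is inl _ then true else false.
Proof.
by case: w => [v|x]; [rewrite mem_map ?mem_enum // => ? ? [] | apply/mapP => -[]].
Qed.

Definition fwd w : seq SE := if w is inr (al, j) then seg al j.+1 (B - j) else [::].
Definition fwd_path w : qp := insubd (ev ss st w) (w, fwd w).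

Lemma walk_fwd al (j : 'I_B) :
  walk ss st (inr (al, j)) (fwd (inr (al, j))) /\
  last (inr (al, j)) (map st (fwd (inr (al, j)))) = inl (t al).
Proof.
have jB : j + (B - j) = B by rewrite subnKC // ltnW.
by have := @walk_seg al j.+1 (B - j); rewrite pos_inr addSn jB pos_max; apply.
Qed.

Lemma fwd_pathE w : qp_val (fwd_path w) = (w, fwd w).
Proof.
by rewrite val_insubd valid_walk; case: w => [v|[al j]] //; rewrite (walk_fwd al j).1.
Qed.

Lemma fwd_path_start w : pstart (fwd_path w) = w.
Proof. by rewrite /pstart fwd_pathE. Qed.

Lemma fwd_path_end w : pend (fwd_path w) \in orig.
Proof.
rewrite pendE /pstart /parr fwd_pathE mem_orig.
by case: w => [v|[al j]] //; rewrite (walk_fwd al j).2.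
Qed.

Lemma fwd_path_prefix r : pend r \in orig ->
  exists z, pmul (fwd_path (pstart r)) z = Some r.
Proof.
rewrite pendE mem_orig; have := walk_qpath r; case rw: (pstart r) => [v|[al j]] wr lr.
  have -> : fwd_path (inl v) = ev ss st (inl v) by apply: val_inj; rewrite /= fwd_pathE.
  exists r.
  by rewrite pmul_evl rw eqxx.
have [fw fl] := walk_fwd al j; rewrite -pos_inr in wr lr.
have jB : 0 < j.+1 <= B.+1 by rewrite /= ltnS; apply: ltnW.
have lv : exists v, last (pos al j.+1) (map st (parr r)) = inl v.
  by move: lr; case: last => // v _; exists v.
have [l' rl'] := seg_prefix jB wr lv.
rewrite subSS -/(fwd (inr (al, j))) in rl'.
have zv : valid ss st (inl (t al), l').
  by move: wr; rewrite rl' walk_cat pos_inr fl valid_walk => /andP [].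
exists (QPath zv); apply: pmul_cat => //; rewrite ?fwd_path_start //.
  by rewrite pendE /pstart /parr fwd_pathE fl.
by rewrite [parr (fwd_path _)]/parr fwd_pathE.
Qed.

Definition bwd w : seq SE := if w is inr (al, j) then seg al 0 j.+1 else [::].
Definition bwd_start w : SV := if w is inr (al, _) then inl (s al) else w.
Definition bwd_path w : qp := insubd (ev ss st w) (bwd_start w, bwd w).

Lemma walk_bwd al (j : 'I_B) :
  walk ss st (inl (s al)) (bwd (inr (al, j))) /\
  last (inl (s al)) (map st (bwd (inr (al, j)))) = inr (al, j).
Proof. by have := @walk_seg al 0 j.+1; rewrite add0n pos_inr; apply; rewrite ltnS ltnW. Qed.

Lemma bwd_pathE w : qp_val (bwd_path w) = (bwd_start w, bwd w).
Proof.
by rewrite val_insubd valid_walk; case: w => [v|[al j]] //; rewrite (walk_bwd al j).1.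
Qed.

Lemma bwd_path_end w : pend (bwd_path w) = w.
Proof.
rewrite pendE /pstart /parr bwd_pathE.
by case: w => [v|[al j]] //; rewrite (walk_bwd al j).2.
Qed.

Lemma bwd_path_start w : pstart (bwd_path w) \in orig.
Proof. by rewrite /pstart bwd_pathE mem_orig; case: w => [v|[al j]]. Qed.

Lemma bwd_path_suffix r : pstart r \in orig ->
  exists z, pmul z (bwd_path (pend r)) = Some r.
Proof.
rewrite mem_orig; have := walk_qpath r; case rs: (pstart r) => [v0|] // wr _.
case re: (pend r) => [v|[al j]].
  have -> : bwd_path (inl v) = ev ss st (inl v) by apply: val_inj; rewrite /= bwd_pathE.
  exists r.
  by rewrite pmul_evr re eqxx.
have jB : 0 < j.+1 <= B by rewrite /=.
have lr : last (inl v0) (map st (parr r)) = pos al j.+1 by rewrite -rs -pendE re pos_inr.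
have [l0 rl0] := seg_suffix jB wr lr; move: wr; rewrite rl0 walk_cat => /andP [w0 wseg].
have zv : valid ss st (inl v0, l0) by rewrite valid_walk.
exists (QPath zv); apply: pmul_cat; rewrite ?bwd_path_end //.
- rewrite /pstart bwd_pathE /= pendE /pstart /parr /=.
  by move: wseg; rewrite /seg /= ssE inordK // => /andP [/eqP <-].
- by rewrite [parr (bwd_path _)]/parr bwd_pathE.
Qed.

Definition blocks (l : seq E) : seq SE :=
  flatten [seq [seq (a, j) | j <- enum 'I_B.+1] | a <- l].

Lemma last_blocks (als : seq E) v0 :
  exists v, last (inl v0 : SV) (map st (blocks als)) = inl v.
Proof.
elim: als v0 => [|a als IH] v0; first by exists v0.
change (blocks (a :: als)) with ([seq (a, j) | j <- enum 'I_B.+1] ++ blocks als).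
rewrite map_cat last_cat.
suff -> : last (inl v0) (map st [seq (a, j) | j <- enum 'I_B.+1]) = inl (t a) by apply: IH.
by rewrite enum_ordSr map_rcons map_rcons last_rcons stE pos_max.
Qed.

Lemma theta_pathE (p : qpath s t) (q : qp) : theta_path B.+1 p = Some q ->
  pstart q = inl (pstart p) /\ parr q = blocks (parr p).
Proof. by rewrite /theta_path; case: insubP => // u _ uE [<-]; rewrite /pstart /parr uE. Qed.

Variable K : fieldType.

Lemma theta_starts (x : kq s t K) : supported (starts_in orig) (theta B.+1 x).
Proof.
apply: (supported_pmap (supportedT x)) => p q _ /theta_pathE [qp _].
by rewrite /starts_in qp mem_orig.
Qed.

Lemma theta_ends (x : kq s t K) : supported (ends_in orig) (theta B.+1 x).
Proof.
apply: (supported_pmap (supportedT x)) => p q _ /theta_pathE [qp qa].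
by rewrite /ends_in pendE qp qa mem_orig; have [v ->] := last_blocks (parr p) (pstart p).
Qed.

Lemma eps_idem : eps s t B.+1 K = idem ss st K orig.
Proof. by rewrite /idem /orig -map_comp. Qed.

End StretchedQuiver.

Theorem theorem1p13 (K : fieldType) (V E : finType) (s t : E -> V)
    (m : nat) (g : 'I_m -> kq s t K) (A : nat) :
  admissible g -> (forall j, uniform (g j)) -> minimal_gens g -> 0 < A ->
  let gt := fun j => theta A (g j) in
  let eqvt := eqv gt in
  let ep := @eps _ _ s t A K in
  let inB := fun x => eqvt x (kq_mul ep (kq_mul x ep)) in
  right_projective eqvt (@kq_add _ _ _ _ K) (@kq_mul _ _ _ _ K) inB
    (fun x => eqvt x (kq_mul x ep)) /\
  left_projective eqvt (@kq_add _ _ _ _ K) (@kq_mul _ _ _ _ K) inB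
    (fun x => eqvt x (kq_mul ep x)).
Proof.
move=> _ _ _; case: A => [|B] // _ /=; rewrite eps_idem; split.
- apply: (right_projective_of_prefix (orig_uniq V E B)) => [j|||].
  + exact: theta_starts.
  + exact: fwd_path_start.
  + exact: fwd_path_end.
  + exact: fwd_path_prefix.
- apply: (left_projective_of_suffix (orig_uniq V E B)) => [j|||].
  + exact: theta_ends.
  + exact: bwd_path_end.
  + exact: bwd_path_start.
  + exact: bwd_path_suffix.
Qed.
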